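(* Let $p$ be an odd prime, $R=F_p+vF_p$ with $v^2=v$, $\theta=\lambda+v\mu$ ($\lambda,\mu\in F_p$) a unit of $R$, and let $C=vC_{1-v}\oplus(1-v)C_v$ be a $\theta$-constacyclic code of length $n$ over $R$. Suppose $C=\langle vh_1(x),(1-v)h_2(x)\rangle$ in $R[x]/\langle x^n-\theta\rangle$, where $h_1(x),h_2(x)\in F_p[x]$ are monic with $h_1(x)\mid x^n-(\lambda+\mu)$ and $h_2(x)\mid x^n-\lambda$. Then $C_{1-v}=[h_1(x)]$ and $C_v=[h_2(x)]$; that is, $h_1(x)$ and $h_2(x)$ are the generator polynomials of the constacyclic codes $C_{1-v}$ and $C_v$, respectively.
   Context: A $\theta$-constacyclic code of length $n$ over $R$ is an $R$-submodule of $R^n$ closed under $(c_0,\dots,c_{n-1})\mapsto(\theta c_{n-1},c_0,\dots,c_{n-2})$, identified with an ideal of $R[x]/\langle x^n-\theta\rangle$ via $(c_i)\mapsto\sum c_ix^i$; $\langle\cdot\rangle$ denotes the generated ideal. $C_v=\{b\in F_p^n : va+(1-v)b\in C\text{ for some }a\in F_p^n\}$, $C_{1-v}=\{a\in F_p^n : va+(1-v)b\in C\text{ for some }b\in F_p^n\}$. For a monic divisor $g(x)$ of $x^n-\alpha$ ($\alpha\in F_p^*$), $[g(x)]$ denotes the ideal of $F_p[x]/\langle x^n-\alpha\rangle$ generated by $g(x)$; the generator polynomial of an $\alpha$-constacyclic code over $F_p$ is the unique monic divisor $g$ of $x^n-\alpha$ with the code equal to $[g(x)]$. *)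

From HB Require Import structures.
From mathcomp Require Import all_boot all_order all_algebra.
From mathcomp Require Import ring.
Set Implicit Arguments. Unset Strict Implicit. Unset Printing Implicit Defensive.
Import Order.TTheory GRing.Theory.
Local Open Scope ring_scope.

(* The ring R = F_p + v F_p with v^2 = v.  An element (mkRv a b) stands for
   a + v b  (a, b in F_p).  Multiplication:
   (a1 + v b1)(a2 + v b2) = a1 a2 + v (a1 b2 + b1 a2 + b1 b2). *)
Record Rv (p : nat) := MkRv { rv0 : 'F_p ; rv1 : 'F_p }.

Section RvRing.
Variable p : nat.
Local Notation R := (Rv p).

Definition rv_pair (x : R) : ('F_p * 'F_p)%type := (rv0 x, rv1 x).
Definition pair_rv (z : ('F_p * 'F_p)%type) : R := MkRv z.1 z.2.
Lemma rv_pairK : cancel rv_pair pair_rv. Proof. by case. Qed.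

HB.instance Definition _ := Equality.copy R (can_type rv_pairK).
HB.instance Definition _ := Choice.copy R (can_type rv_pairK).
HB.instance Definition _ := Countable.copy R (can_type rv_pairK).
HB.instance Definition _ := Finite.copy R (can_type rv_pairK).

Definition rv_zero : R := MkRv 0 0.
Definition rv_opp (x : R) : R := MkRv (- rv0 x) (- rv1 x).
Definition rv_add (x y : R) : R := MkRv (rv0 x + rv0 y) (rv1 x + rv1 y).
Definition rv_one : R := MkRv 1 0.
Definition rv_mul (x y : R) : R :=
  MkRv (rv0 x * rv0 y) (rv0 x * rv1 y + rv1 x * rv0 y + rv1 x * rv1 y).

Lemma rv_eq (a b c d : 'F_p) : a = c -> b = d -> MkRv a b = MkRv c d.
Proof. by move=> -> ->. Qed.

Lemma rv_addA : associative rv_add.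
Proof. by case=> ? ? [? ?] [? ?]; apply: rv_eq => /=; ring. Qed.
Lemma rv_addC : commutative rv_add.
Proof. by case=> ? ? [? ?]; apply: rv_eq => /=; ring. Qed.
Lemma rv_add0 : left_id rv_zero rv_add.
Proof. by case=> ? ?; apply: rv_eq => /=; ring. Qed.
Lemma rv_addN : left_inverse rv_zero rv_opp rv_add.
Proof. by case=> ? ?; apply: rv_eq => /=; ring. Qed.

HB.instance Definition _ := GRing.isZmodule.Build R rv_addA rv_addC rv_add0 rv_addN.

Lemma rv_mulA : associative rv_mul.
Proof. by case=> ? ? [? ?] [? ?]; apply: rv_eq => /=; ring. Qed.
Lemma rv_mulC : commutative rv_mul.
Proof. by case=> ? ? [? ?]; apply: rv_eq => /=; ring. Qed.
Lemma rv_mul1 : left_id rv_one rv_mul.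
Proof. by case=> ? ?; apply: rv_eq => /=; ring. Qed.
Lemma rv_mulDl : left_distributive rv_mul rv_add.
Proof. by case=> ? ? [? ?] [? ?]; apply: rv_eq => /=; ring. Qed.
Lemma rv_one_neq0 : rv_one != rv_zero.
Proof. by apply/eqP => -[] /eqP; rewrite oner_eq0. Qed.

HB.instance Definition _ :=
  GRing.Zmodule_isComNzRing.Build R rv_mulA rv_mulC rv_mul1 rv_mulDl rv_one_neq0.

End RvRing.

Definition vR (p : nat) : Rv p := MkRv 0 1.
Definition embR (p : nat) (a : 'F_p) : Rv p := MkRv a 0.

Definition wpoly (T : nzRingType) (n : nat) (c : 'rV[T]_n) : {poly T} :=
  \sum_(i < n) c 0 i *: 'X^i.

(* The ideal of T[x]/<x^n - alpha> generated by the polynomials in gs, seen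
   as the set of words c of length n such that c(x) = sum_k a_k g_k
   modulo (x^n - alpha) for some polynomials a_k. *)
Definition gen_ideal (T : comNzRingType) (n : nat) (alpha : T)
    (gs : seq {poly T}) (c : 'rV[T]_n) : Prop :=
  exists (a : seq {poly T}) (q : {poly T}),
    size a = size gs /\
    wpoly c = \sum_(k < size gs) a`_k * gs`_k + q * ('X^n - alpha%:P).

Definition Cv (p n : nat) (C : {set 'rV[Rv p]_n}) : {set 'rV['F_p]_n} :=
  [set b : 'rV['F_p]_n | [exists a : 'rV['F_p]_n,
     (\row_i (vR p * embR (a 0 i) + (1 - vR p) * embR (b 0 i))) \in C]].
Definition C1v (p n : nat) (C : {set 'rV[Rv p]_n}) : {set 'rV['F_p]_n} :=
  [set a : 'rV['F_p]_n | [exists b : 'rV['F_p]_n,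
     (\row_i (vR p * embR (a 0 i) + (1 - vR p) * embR (b 0 i))) \in C]].

From HB Require Import structures.
From mathcomp Require Import all_boot all_order all_algebra.
From mathcomp Require Import ring.
Set Implicit Arguments. Unset Strict Implicit. Unset Printing Implicit Defensive.
Import GRing.Theory.
Local Open Scope ring_scope.

(* Since v is idempotent, R = F_p + v F_p splits as F_p x F_p through the two
   evaluations v |-> 1 and v |-> 0, the idempotents v and 1 - v cutting out the
   two factors.  Applying the evaluation v |-> 1 (resp. v |-> 0) to a relation
   c(x) = a_1 v h_1 + a_2 (1 - v) h_2 + q (x^n - theta) kills the other
   generator and turns theta into lambda + mu (resp. lambda), which shows that
   C_{1-v} (resp. C_v) lies in [h_1] (resp. [h_2]); conversely, multiplying a
   relation over F_p by the idempotent v (resp. 1 - v) lifts it back to C,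
   because v theta = v (lambda + mu) and (1 - v) theta = (1 - v) lambda. *)

Section GenIdeal.
Variables (T : comNzRingType) (n : nat) (alpha : T).

Lemma gen_ideal1P (g : {poly T}) (c : 'rV[T]_n) :
  gen_ideal alpha [:: g] c <->
  exists a q : {poly T}, wpoly c = a * g + q * ('X^n - alpha%:P).
Proof.
split=> [[[|a [|? ?]]] [q [//= _ ->]]|[a [q Ec]]].
  by exists a, q; rewrite big_ord1.
by exists [:: a], q; rewrite big_ord1.
Qed.

Lemma gen_ideal2P (g1 g2 : {poly T}) (c : 'rV[T]_n) :
  gen_ideal alpha [:: g1; g2] c <->
  exists a1 a2 q : {poly T},
    wpoly c = a1 * g1 + a2 * g2 + q * ('X^n - alpha%:P).
Proof.
split=> [[[|a1 [|a2 [|? ?]]]] [q [//= _ ->]]|[a1 [a2 [q Ec]]]].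
  by exists a1, a2, q; rewrite !big_ord_recl big_ord0 addr0.
by exists [:: a1; a2], q; rewrite Ec !big_ord_recl big_ord0 addr0.
Qed.

Lemma gen_ideal2C (g1 g2 : {poly T}) (c : 'rV[T]_n) :
  gen_ideal alpha [:: g1; g2] c <-> gen_ideal alpha [:: g2; g1] c.
Proof.
suff swap h1 h2 : gen_ideal alpha [:: h1; h2] c -> gen_ideal alpha [:: h2; h1] c.
  by split; apply: swap.
move=> /gen_ideal2P [a1 [a2 [q Ec]]]; apply/gen_ideal2P.
by exists a2, a1, q; rewrite Ec (addrC (a1 * h1)).
Qed.

End GenIdeal.

Lemma wpoly_map (S T : comNzRingType) (f : {rmorphism S -> T}) n (c : 'rV[S]_n) :
  map_poly f (wpoly c) = wpoly (map_mx f c).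
Proof.
rewrite /wpoly rmorph_sum; apply: eq_bigr => i _.
by rewrite /= map_polyZ map_polyXn mxE.
Qed.

Section RvEvaluation.
Variable p : nat.
Local Notation R := (Rv p).

Definition rv_at1 (x : R) : 'F_p := rv0 x + rv1 x.
Definition rv_at0 (x : R) : 'F_p := rv0 x.

Lemma rv_at1_is_zmod_morphism : zmod_morphism rv_at1.
Proof. by case=> ? ? [? ?]; rewrite /rv_at1 /=; ring. Qed.
Lemma rv_at1_is_monoid_morphism : monoid_morphism rv_at1.
Proof. by split=> [|[? ?] [? ?]]; rewrite /rv_at1 /=; ring. Qed.
HB.instance Definition _ :=
  GRing.isZmodMorphism.Build _ _ rv_at1 rv_at1_is_zmod_morphism.
HB.instance Definition _ :=
  GRing.isMonoidMorphism.Build _ _ rv_at1 rv_at1_is_monoid_morphism.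

Lemma rv_at0_is_zmod_morphism : zmod_morphism rv_at0.
Proof. by case=> ? ? [? ?]. Qed.
Lemma rv_at0_is_monoid_morphism : monoid_morphism rv_at0.
Proof. by split=> // [[? ?] [? ?]]. Qed.
HB.instance Definition _ :=
  GRing.isZmodMorphism.Build _ _ rv_at0 rv_at0_is_zmod_morphism.
HB.instance Definition _ :=
  GRing.isMonoidMorphism.Build _ _ rv_at0 rv_at0_is_monoid_morphism.

Lemma embR_is_zmod_morphism : zmod_morphism (@embR p).
Proof. by move=> x y; apply: rv_eq => /=; ring. Qed.
Lemma embR_is_monoid_morphism : monoid_morphism (@embR p).
Proof. by split=> // x y; apply: rv_eq => /=; ring. Qed.
HB.instance Definition _ :=
  GRing.isZmodMorphism.Build _ _ (@embR p) embR_is_zmod_morphism.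
HB.instance Definition _ :=
  GRing.isMonoidMorphism.Build _ _ (@embR p) embR_is_monoid_morphism.

Lemma embRK1 : cancel (@embR p) rv_at1.
Proof. by move=> a; rewrite /rv_at1 /= addr0. Qed.
Lemma embRK0 : cancel (@embR p) rv_at0.
Proof. by []. Qed.

Lemma rv_at1_v : rv_at1 (vR p) = 1.
Proof. by rewrite /rv_at1 /= add0r. Qed.
Lemma rv_at1_1v : rv_at1 (1 - vR p) = 0.
Proof. by rewrite /rv_at1 /=; ring. Qed.
Lemma rv_at0_1v : rv_at0 (1 - vR p) = 1.
Proof. by rewrite /rv_at0 /=; ring. Qed.
Lemma rv_at0_v : rv_at0 (vR p) = 0.
Proof. by []. Qed.

Lemma mul_v_at1 (x : R) : vR p * x = vR p * embR (rv_at1 x).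
Proof. by case: x => a b; apply: rv_eq => /=; rewrite /rv_at1 /=; ring. Qed.
Lemma mul_1v_at0 (x : R) : (1 - vR p) * x = (1 - vR p) * embR (rv_at0 x).
Proof. by case: x => a b; apply: rv_eq => /=; rewrite /rv_at0 /=; ring. Qed.

End RvEvaluation.

Definition rv_word (p n : nat) (e f : Rv p) (a b : 'rV['F_p]_n) : 'rV[Rv p]_n :=
  \row_i (e * embR (a 0 i) + f * embR (b 0 i)).

Lemma mem_C1v (p n : nat) (C : {set 'rV[Rv p]_n}) (a : 'rV['F_p]_n) :
  a \in C1v C <-> exists b, rv_word (vR p) (1 - vR p) a b \in C.
Proof. by rewrite inE; apply: iff_sym; apply: rwP; apply: existsP. Qed.

Lemma mem_Cv (p n : nat) (C : {set 'rV[Rv p]_n}) (b : 'rV['F_p]_n) :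
  b \in Cv C <-> exists a, rv_word (1 - vR p) (vR p) b a \in C.
Proof.
have swap a : rv_word (1 - vR p) (vR p) b a = rv_word (vR p) (1 - vR p) a b.
  by apply/rowP => i; rewrite !mxE addrC.
rewrite inE; split=> [/existsP [a Ca]|[a Ca]]; [exists a | apply/existsP; exists a].
  by rewrite swap; exact: Ca.
by rewrite swap in Ca; exact: Ca.
Qed.

(* For (e, f, ev) one takes either (v, 1 - v, v |-> 1) or (1 - v, v, v |-> 0). *)
Section Component.
Variables (p n : nat) (e f : Rv p) (ev : {rmorphism Rv p -> 'F_p}).
Hypothesis embRK : cancel (@embR p) ev.
Hypothesis ev_e : ev e = 1.
Hypothesis ev_f : ev f = 0.
Hypothesis mul_e_ev : forall x, e * x = e * embR (ev x).

Lemma ev_rv_word (a b : 'rV['F_p]_n) : map_mx ev (rv_word e f a b) = a.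
Proof.
by apply/rowP => i; rewrite !mxE rmorphD !rmorphM /= ev_e ev_f !embRK; ring.
Qed.

Lemma map_embRK (h : {poly 'F_p}) : map_poly ev (map_poly (@embR p) h) = h.
Proof. by rewrite -map_poly_comp map_poly_id // => x _; apply: embRK. Qed.

Lemma wpoly_rv_word0 (a : 'rV['F_p]_n) :
  wpoly (rv_word e f a 0) = e%:P * map_poly (@embR p) (wpoly a).
Proof.
rewrite wpoly_map /wpoly mulr_sumr; apply: eq_bigr => i _.
by rewrite !mxE -!mul_polyC rmorph0 mulr0 addr0 polyCM mulrA.
Qed.

Variables (theta : Rv p) (g g' : {poly 'F_p}) (C : {set 'rV[Rv p]_n}).
Hypothesis memC : forall c, c \in C <->
  gen_ideal theta [:: e%:P * map_poly (@embR p) g; f%:P * map_poly (@embR p) g'] c.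

Lemma component_ideal (a : 'rV['F_p]_n) :
  (exists b, rv_word e f a b \in C) <-> gen_ideal (ev theta) [:: g] a.
Proof.
split=> [[b /memC /gen_ideal2P [a1 [a2 [q Ec]]]]|/gen_ideal1P [a1 [q Ea]]].
  apply/gen_ideal1P; exists (map_poly ev a1), (map_poly ev q).
  rewrite -(ev_rv_word a b) -wpoly_map Ec.
  rewrite !(rmorphD (map_poly ev)) !(rmorphM (map_poly ev)) (rmorphB (map_poly ev)) /=.
  rewrite map_polyXn !map_polyC /= ev_e ev_f map_embRK.
  by rewrite polyC1 polyC0 mul1r mul0r mulr0 addr0.
exists 0; apply/memC/gen_ideal2P.
exists (map_poly (@embR p) a1), 0, (e%:P * map_poly (@embR p) q).
have e_theta : e%:P * theta%:P = e%:P * (embR (ev theta))%:P.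
  by rewrite -!polyCM mul_e_ev.
rewrite wpoly_rv_word0 Ea (rmorphD (map_poly (@embR p))) !(rmorphM (map_poly (@embR p))).
rewrite (rmorphB (map_poly (@embR p))) /= map_polyXn map_polyC.
rewrite mul0r addr0; apply/eqP; rewrite -subr_eq0; apply/eqP.
transitivity (map_poly (@embR p) q * (e%:P * theta%:P - e%:P * (embR (ev theta))%:P)).
  by ring.
by rewrite e_theta subrr mulr0.
Qed.

End Component.

Theorem theorem3p5 (p n : nat) (lam mu : 'F_p)
    (C : {set 'rV[Rv p]_n}) (h1 h2 : {poly 'F_p}) :
  prime p -> odd p -> (0 < n)%N ->
  (exists u : Rv p, MkRv lam mu * u = 1) ->
  h1 \is monic -> h2 \is monic ->
  h1 %| 'X^n - (lam + mu)%:P -> h2 %| 'X^n - lam%:P ->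
  (forall c, c \in C <->
     gen_ideal (MkRv lam mu)
       [:: (vR p)%:P * map_poly (@embR p) h1;
           (1 - vR p)%:P * map_poly (@embR p) h2] c) ->
  (forall a, a \in C1v C <-> gen_ideal (lam + mu) [:: h1] a) /\
  (forall b, b \in Cv C <-> gen_ideal lam [:: h2] b).
Proof.
move=> _ _ _ _ _ _ _ _ memC; split=> a; [rewrite mem_C1v | rewrite mem_Cv].
  exact: (component_ideal (@embRK1 p) (@rv_at1_v p) (@rv_at1_1v p) (@mul_v_at1 p) memC).
have memC' c : c \in C <-> gen_ideal (MkRv lam mu)
    [:: (1 - vR p)%:P * map_poly (@embR p) h2; (vR p)%:P * map_poly (@embR p) h1] c.
  by apply: iff_trans (memC c) _; apply: gen_ideal2C.
exact: (component_ideal (@embRK0 p) (@rv_at0_1v p) (@rv_at0_v p) (@mul_1v_at0 p) memC').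
Qed.
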